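(* Let $n\ge1$ and $\mathbf s\in\mathbb C^n$. On the $YQ(1)$-module $V(\mathbf s)$ each $Z_{2i}$ ($i\ge0$) acts by a scalar $\chi_{2i}$, and $\sum_{i\ge0}\chi_{2i}u^{-2i-1}=\dfrac{\sum_{i\ge0}\sigma_{2i+1}(\mathbf s)u^{-2i-1}}{1+\sum_{i\ge1}\sigma_{2i}(\mathbf s)u^{-2i}}$, where $\sigma_p$ is the $p$-th elementary symmetric polynomial ($\sigma_p=0$ for $p>n$).
   Context: $YQ(1)$ is the unital superalgebra generated by $T_{i,j}^{(m)}$, $m\ge1$, $i,j\in\{\pm1\}$, of parity $p(i)+p(j)$ ($p(1)=0,p(-1)=1$), with $T_{i,j}(u)=\delta_{ij}+\sum_m T^{(m)}_{i,j}u^{-m}$ and defining relations $(u^2-v^2)[T_{i,j}(u),T_{k,l}(v)](-1)^{p(i)p(k)+p(i)p(l)+p(k)p(l)}=(u+v)(T_{k,j}(u)T_{i,l}(v)-T_{k,j}(v)T_{i,l}(u))-(u-v)(T_{-k,j}(u)T_{-i,l}(v)-T_{k,-j}(v)T_{i,-l}(u))(-1)^{p(k)+p(l)}$ and $T_{i,j}(-u)=T_{-i,-j}(u)$ (supercommutators). Set $\eta_i=(-\tfrac12)^i(\operatorname{ad}T^{(2)}_{1,1})^i(T^{(1)}_{1,-1})$ and $Z_{2i}=\tfrac12[\eta_0,\eta_{2i}]$ (central elements). Let $U(\mathfrak h_n)$ be the superalgebra generated by odd $\xi_1,\dots,\xi_n$ with $\xi_i\xi_j+\xi_j\xi_i=0$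 ($i\ne j$), $x_i=\xi_i^2$. There is a surjective homomorphism $\varphi_n:YQ(1)\to W^n\subset U(\mathfrak h_n)$ onto the principal finite $W$-algebra of $Q(n)$ with $\varphi_n(T^{(k)}_{1,1})=(-1)^k[\Sigma_k]_{even}$, $\varphi_n(T^{(k)}_{-1,1})=(-1)^k[\Sigma_k]_{odd}$, $\Sigma_k=\sum_{i_1<\dots<i_k}\prod_{j=1}^k(x_{i_j}+(-1)^{k-j}\xi_{i_j})$ ($0$ for $k>n$). $V(\mathbf s)$ is a simple $\mathbb Z_2$-graded $U(\mathfrak h_n)$-module with $x_i$ acting by $s_i$, made into a $YQ(1)$-module via $\varphi_n$. *)

(* Complex numbers are modelled as  complex R = R[i]  for
   R : realType (mathcomp-reals), i.e. the algebraic closure of the real field. *)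
From HB Require Import structures.
From mathcomp Require Import all_boot all_order all_algebra.
From mathcomp Require Import complex.
From mathcomp Require Import reals.
Set Implicit Arguments. Unset Strict Implicit. Unset Printing Implicit Defensive.
Import Order.TTheory GRing.Theory Num.Theory.
Local Open Scope ring_scope.

(* A finite-dimensional Z_2-graded module over U(h_n) is given concretely by *)
(*   - its (nonzero) dimension d.+1, vectors being column vectors 'cV_(d.+1), *)
(*   - the parity operator P (P = +1 on the even part, -1 on the odd part),  *)
(*   - the matrices Xi i by which the odd generators xi_i act.               *)
(* The action of an element a of U(h_n) is the matrix rho(a), acting on the   *)
(* left (v |-> rho(a) *m v).  All constructions below compute the images     *)
(* under rho of the elements of U(h_n) (resp. of YQ(1) via phi_n).           *)

Section Module.
Variables (K : fieldType) (n d : nat).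
Local Notation M := 'M[K]_d.+1.
Variables (P : M) (Xi : 'I_n -> M).

Definition is_graded_hn_module : Prop :=
  [/\ P * P = 1,
      forall i, P * Xi i = - (Xi i * P)
    & forall i j, i != j -> Xi i * Xi j + Xi j * Xi i = 0].

(* x_i = xi_i^2 acts by s_i. *)
Definition x_acts_by (s : 'I_n -> K) : Prop :=
  forall i, Xi i * Xi i = (s i)%:M.

(* A subspace (row space of U, made of transposed vectors) is a graded
   submodule iff it is stable under P and all the Xi i. *)
Definition graded_submodule (U : 'M[K]_d.+1) : bool :=
  stablemx U P^T && [forall i, stablemx U (Xi i)^T].

Definition graded_simple : Prop :=
  forall U : 'M[K]_d.+1, graded_submodule U -> (U == 0) || row_full U.

Definition xmx (i : 'I_n) : M := Xi i * Xi i.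

Definition even_part (A : M) : M := 2%:R^-1 *: (A + P * A * P).
Definition odd_part (A : M) : M := 2%:R^-1 *: (A - P * A * P).

(* rho(Sigma_k), Sigma_k = sum_{i_1<...<i_k} prod_{j=1}^k (x_{i_j} + (-1)^(k-j) xi_{i_j}).
   enum I lists the elements of I in increasing order; the element i in
   position j (1-based) is  (index i (enum I)).+1. *)
Definition Sigma (k : nat) : M :=
  \sum_(I : {set 'I_n} | #|I| == k)
     \prod_(i <- enum I) (xmx i + (-1) ^+ (k - (index i (enum I)).+1) *: Xi i).

Definition phiT11 (k : nat) : M := (-1) ^+ k *: even_part (Sigma k).
Definition phiTm11 (k : nat) : M := (-1) ^+ k *: odd_part (Sigma k).

(* The defining relation T_{i,j}(-u) = T_{-i,-j}(u) of YQ(1) gives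
   T^{(m)}_{1,-1} = (-1)^m T^{(m)}_{-1,1}; hence the image of T^{(1)}_{1,-1}. *)
Definition phiT1m1 (k : nat) : M := (-1) ^+ k *: phiTm11 k.

Definition scomm (pa pb : bool) (A B : M) : M :=
  A * B - (-1) ^+ (pa && pb) * (B * A).

(* eta_i = (-1/2)^i (ad T^{(2)}_{1,1})^i (T^{(1)}_{1,-1});
   T^{(2)}_{1,1} is even, T^{(1)}_{1,-1} is odd, so all eta_i are odd. *)
Definition eta (i : nat) : M :=
  (- 2%:R^-1) ^+ i *: iter i (scomm false true (phiT11 2)) (phiT1m1 1).

Definition Z (i : nat) : M := 2%:R^-1 *: scomm true true (eta 0) (eta (2 * i)).

End Module.

(* p-th elementary symmetric polynomial evaluated at s (0 for p > n, 1 for p = 0). *)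
Definition esym_val (K : fieldType) (n : nat) (s : 'I_n -> K) (p : nat) : K :=
  \sum_(I : {set 'I_n} | #|I| == p) \prod_(i in I) s i.

(* In any module over U(h_n), T^{(1)}_{1,-1} acts as sum_a xi_a and T^{(2)}_{1,1} as
   sum_{i<j} (s_i s_j - xi_i xi_j).  By the Clifford relations, commuting the latter with
   sum_a c_a xi_a gives -2 sum_a (L c)_a xi_a, where
   (L c)_i = sum_{j>i} s_j c_j - sum_{j<i} s_j c_j.  Hence eta_k = sum_a (L^k 1)_a xi_a, and
   Z_{2i} = 1/2 [eta_0, eta_{2i}] is the scalar chi_{2i} = sum_a s_a (L^{2i} 1)_a.
   For the generating function let c_a(t) = sum_k (L^k 1)_a t^k and chi(t) = sum_a s_a c_a(t).
   The recursion c = 1 + t L c says that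
   u_i = 1 + t (sum_{j>=i} s_j c_j - sum_{j<i} s_j c_j) equals both (1 + s_i t) c_i and
   (1 - s_{i-1} t) c_{i-1}, so telescoping from u_0 = 1 + t chi to u_n = 1 - t chi gives
   (1 - t chi) prod_a (1 + s_a t) = (1 + t chi) prod_a (1 - s_a t), whose odd part in t is
   the claimed identity.  The series are handled as polynomials truncated mod t^N. *)

From Pilot Require Import Defs.
From HB Require Import structures.
From mathcomp Require Import all_boot all_order all_algebra.
From mathcomp Require Import complex.
From mathcomp Require Import reals.
From mathcomp Require Import ring zify.
Import Order.TTheory GRing.Theory Num.Theory.
Local Open Scope ring_scope.

Lemma sum_ord_even_odd {V : nmodType} m (f : nat -> V) :
  \sum_(k < (2 * m).+1) f k = \sum_(j < m.+1) f (2 * j)%N + \sum_(j < m) f (2 * j).+1.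
Proof.
elim: m => [|m IH]; first by rewrite big_ord0 addr0 !big_ord1.
rewrite mulnS !addSn add0n (big_ord_recr (2 * m).+2) (big_ord_recr (2 * m).+1) /= IH.
rewrite (big_ord_recr m.+1) [X in _ = _ + X]big_ord_recr /= mulnS !addSn add0n.
by rewrite -addrA [RHS]addrACA [f _ + _]addrC.
Qed.

Lemma mulr_scalar_mxl {K : pzRingType} {d} (a : K) (A : 'M[K]_d.+1) : a%:M * A = a *: A.
Proof. by rewrite -mulmxE mul_scalar_mx. Qed.

Lemma mulr_scalar_mxr {K : comPzRingType} {d} (a : K) (A : 'M[K]_d.+1) : A * a%:M = a *: A.
Proof. by rewrite -mulmxE mul_mx_scalar. Qed.

Lemma mulrBD_add_mulrDB {R : pzRingType} (a b c e : R) :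
  (a - b) * (c + e) + (a + b) * (c - e) = (a * c - b * e) *+ 2.
Proof.
have cancel_yz (x y z w : R) : x + y - (z + w) + (x + z - (y + w)) = (x - w) *+ 2.
  rewrite !opprD !addrA mulr2n addrAC (addrAC _ (- z)) (addrAC _ (- z)) subrK.
  by rewrite (addrAC _ (- w) (- y)) (addrAC _ x (- y)) (addrAC _ (- w) (- y)) addrK addrA.
by rewrite !(mulrDl, mulrDr, mulrBl, mulrBr) cancel_yz.
Qed.

Lemma enum_set2_ltn {n} (i j : 'I_n) : (i < j)%N -> enum [set i; j] = [:: i; j].
Proof.
move=> ij; have ltn_ord_trans : transitive (fun x y : 'I_n => (x < y)%N).
  by move=> y x z; apply: ltn_trans.
apply: (irr_sorted_eq ltn_ord_trans) => [x||/=|x]; first by rewrite ltnn.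
- rewrite /enum_mem -enumT; apply: sorted_filter => //.
  by move: (iota_ltn_sorted 0 n); rewrite -val_enum_ord sorted_map enumT.
- by rewrite ij.
- by rewrite mem_enum !inE.
Qed.

Lemma sum_card2 {V : nmodType} {n} (F : {set 'I_n} -> V) :
  \sum_(I : {set 'I_n} | #|I| == 2%N) F I = \sum_(i < n) \sum_(j < n | (i < j)%N) F [set i; j].
Proof.
case: n F => [|n] F.
  rewrite big_ord0 big_pred0 // => I.
  by have := max_card I; rewrite card_ord leqn0 => /eqP ->.
pose first_two (I : {set 'I_n.+1}) := (nth ord0 (enum I) 0, nth ord0 (enum I) 1).
rewrite (reindex_onto (fun p => [set p.1; p.2]) first_two) /=; last first.
  move=> I /eqP cardI; have : size (enum I) = 2 by rewrite -cardE.
  rewrite /first_two; case e: (enum I) => [|x [|y []]] //= _.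
  by apply/setP => z; rewrite !inE -mem_enum e !inE.
rewrite pair_big_dep /=; apply: eq_bigl => -[a b] /=.
rewrite cards2 /first_two; case: (ltngtP a b) => [ab|ba|/val_inj ->]; last by rewrite eqxx.
- have ne : a != b by rewrite -val_eqE neq_ltn ab.
  by rewrite ne enum_set2_ltn //= eqxx.
- have ne : a != b by rewrite -val_eqE neq_ltn ba orbT.
  by rewrite ne setUC enum_set2_ltn //= xpair_eqE eq_sym (negbTE ne) andbF.
Qed.

Lemma coef_prod_1DCX {K : fieldType} {n} (s : 'I_n -> K) p :
  (\prod_(i < n) (1 + (s i)%:P * 'X))`_p = esym_val s p.
Proof.
under eq_bigr => i _ do rewrite addrC.
rewrite bigA_distr coef_sum /esym_val [RHS]big_mkcond /=; apply: eq_bigr => I _.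
rewrite -(big_mkcond (fun i => i \in I)) /= big_split /= -rmorph_prod prodr_const.
by rewrite coefCM coefXn eq_sym; case: eqP; rewrite ?mulr1 ?mulr0.
Qed.

Lemma esym_valN {K : fieldType} {n} (s : 'I_n -> K) p :
  esym_val (fun i => - s i) p = (-1) ^+ p * esym_val s p.
Proof.
by rewrite /esym_val mulr_sumr; apply: eq_bigr => I /eqP <-; rewrite prodrN.
Qed.

Lemma coef_prod_1BCX {K : fieldType} {n} (s : 'I_n -> K) p :
  (\prod_(i < n) (1 - (s i)%:P * 'X))`_p = (-1) ^+ p * esym_val s p.
Proof.
by under eq_bigr do rewrite -mulNr -polyCN; rewrite coef_prod_1DCX esym_valN.
Qed.

Lemma take_poly_mulr {R : comNzRingType} {N : nat} {p q : {poly R}} (r : {poly R}) :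
  take_poly N p = take_poly N q -> take_poly N (p * r) = take_poly N (q * r).
Proof.
have take_mulr (a : {poly R}) : take_poly N (a * r) = take_poly N (take_poly N a * r).
  by rewrite -{1}(poly_take_drop N a) mulrDl take_polyD mulrAC take_polyMXn_0 addr0.
by move=> e; rewrite take_mulr e -take_mulr.
Qed.

Lemma take_poly_mull {R : comNzRingType} {N : nat} {p q : {poly R}} (r : {poly R}) :
  take_poly N p = take_poly N q -> take_poly N (r * p) = take_poly N (r * q).
Proof. by rewrite ![r * _]mulrC; apply: take_poly_mulr. Qed.

(* The operator L of the header; [phiT11_2_comm] identifies it with -1/2 ad T^{(2)}_{1,1}. *)
Definition adT2 {R : pzRingType} (n : nat) (s c : nat -> R) (i : nat) : R :=
  \sum_(i.+1 <= j < n) s j * c j - \sum_(0 <= j < i) s j * c j.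

Definition eta_coef {R : pzRingType} (n : nat) (s : nat -> R) (k : nat) : nat -> R :=
  iter k (adT2 n s) (fun _ => 1).

Lemma adT2_ord {R : pzRingType} {n} (s c : nat -> R) (i : 'I_n) :
  adT2 n s c i = \sum_(j < n | (i < j)%N) s j * c j - \sum_(j < n | (j < i)%N) s j * c j.
Proof.
by rewrite /adT2 big_geq_mkord (big_nat_widen _ _ _ _ _ (ltnW (ltn_ord i))) big_mkord.
Qed.

Section XiClifford.
Context {K : fieldType} {n d : nat} (P : 'M[K]_d.+1) (Xi : 'I_n -> 'M[K]_d.+1).
Variable s : nat -> K.
Hypotheses (PP : P * P = 1) (PXi : forall i, P * Xi i = - (Xi i * P)).
Hypothesis XiC : forall i j, i != j -> Xi i * Xi j + Xi j * Xi i = 0.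
Hypothesis XiXi : forall i : 'I_n, Xi i * Xi i = (s i)%:M.
Hypothesis two_neq0 : 2%:R != 0 :> K.
Local Notation M := 'M[K]_d.+1.

Definition xi_comb (c : nat -> K) : M := \sum_(a < n) c a *: Xi a.

Lemma conjP_Xi i : P * Xi i * P = - Xi i.
Proof. by rewrite PXi mulNr -mulrA PP mulr1. Qed.

Lemma conjP_scalar (a : K) : P * a%:M * P = a%:M.
Proof. by rewrite mulr_scalar_mxr -scalerAl PP scalemx1. Qed.

Lemma conjP_mul (A B : M) : P * (A * B) * P = (P * A * P) * (P * B * P).
Proof. by rewrite !mulrA -[P * A * P * P]mulrA PP mulr1. Qed.

Lemma half_mulrn2 (A : M) : 2%:R^-1 *: (A *+ 2) = A.
Proof. by rewrite -scaler_nat scalerA mulVf // scale1r. Qed.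

Lemma Xi_comb_anticomm j c :
  Xi j * xi_comb c + xi_comb c * Xi j = (s j * c j *+ 2)%:M.
Proof.
rewrite mulr_sumr mulr_suml -big_split (bigD1 j) //= big1 ?addr0; last first.
  by move=> a aj; rewrite -scalerAr -scalerAl -scalerDr XiC ?scaler0 // eq_sym.
by rewrite -scalerAr -scalerAl -scalerDr XiXi -mulr2n -raddfMn scale_scalar_mx mulrnAr mulrC.
Qed.

Lemma xi_comb_anticomm c c' :
  xi_comb c * xi_comb c' + xi_comb c' * xi_comb c =
  ((\sum_(a < n) s a * c a * c' a) *+ 2)%:M.
Proof.
rewrite [xi_comb c]/xi_comb mulr_suml mulr_sumr -big_split /= -sumrMnl raddf_sum.
apply: eq_bigr => a _.
by rewrite -scalerAl -scalerAr -scalerDr Xi_comb_anticomm scale_scalar_mx mulrnAr mulrCA mulrA.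
Qed.

Lemma XiXi_comb_comm i j c :
  Xi i * Xi j * xi_comb c - xi_comb c * (Xi i * Xi j) =
  (s j * c j *+ 2) *: Xi i - (s i * c i *+ 2) *: Xi j.
Proof.
have -> : Xi i * Xi j * xi_comb c - xi_comb c * (Xi i * Xi j) =
    Xi i * (Xi j * xi_comb c + xi_comb c * Xi j) - (Xi i * xi_comb c + xi_comb c * Xi i) * Xi j.
  by rewrite mulrDr mulrDl !mulrA opprD addrA addrK.
by rewrite !Xi_comb_anticomm mulr_scalar_mxr mulr_scalar_mxl.
Qed.

Lemma phiT1m1_1 : phiT1m1 P Xi 1 = xi_comb (fun _ => 1).
Proof.
have Sigma1 : Sigma Xi 1 = \sum_(i < n) ((s i)%:M + Xi i).
  rewrite /Sigma big_cards1; apply: eq_bigr => i _.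
  by rewrite enum_set1 big_seq1 /= eqxx expr0 scale1r /xmx XiXi.
rewrite /phiT1m1 /phiTm11 scalerA mulrNN mulr1 scale1r /odd_part Sigma1.
rewrite mulr_sumr mulr_suml -sumrB scaler_sumr; apply: eq_bigr => i _.
rewrite mulrDr mulrDl conjP_scalar conjP_Xi opprD opprK addrACA subrr add0r.
by rewrite -mulr2n half_mulrn2 scale1r.
Qed.

Lemma phiT11_2 :
  phiT11 P Xi 2 = \sum_(i < n) \sum_(j < n | (i < j)%N) ((s i * s j)%:M - Xi i * Xi j).
Proof.
have Sigma2 : Sigma Xi 2 =
    \sum_(i < n) \sum_(j < n | (i < j)%N) ((s i)%:M - Xi i) * ((s j)%:M + Xi j).
  rewrite /Sigma sum_card2; apply: eq_bigr => i _; apply: eq_bigr => j ij.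
  have ij' : i != j by rewrite -val_eqE ltn_eqF.
  rewrite enum_set2_ltn // !big_cons big_nil /= eqxx (negbTE ij') mulr1 /xmx !XiXi.
  by rewrite expr1 expr0 scaleN1r scale1r.
rewrite /phiT11 expr2 mulrNN mulr1 scale1r /even_part Sigma2.
rewrite mulr_sumr mulr_suml -big_split scaler_sumr; apply: eq_bigr => i _.
rewrite mulr_sumr mulr_suml -big_split scaler_sumr; apply: eq_bigr => j _ /=.
rewrite conjP_mul [P * (_ - _)]mulrBr [P * (_ + _)]mulrDr [(P * _ - _) * P]mulrBl.
rewrite [(P * _ + _) * P]mulrDl !conjP_scalar !conjP_Xi opprK.
by rewrite mulrBD_add_mulrDB half_mulrn2 scalar_mxM mulmxE.
Qed.

Lemma phiT11_2_comm c :
  phiT11 P Xi 2 * xi_comb c - xi_comb c * phiT11 P Xi 2 = - (xi_comb (adT2 n s c) *+ 2).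
Proof.
have comm_scalarB (a : K) (A B : M) : (a%:M - A) * B - B * (a%:M - A) = - (A * B - B * A).
  by rewrite mulrBl mulrBr mulr_scalar_mxl mulr_scalar_mxr [_ - A * B]addrC addrKA opprK addrC opprB.
rewrite phiT11_2 mulr_suml mulr_sumr -sumrB.
under eq_bigr => i _ do rewrite mulr_suml mulr_sumr -sumrB.
under eq_bigr => i _ do under eq_bigr => j _ do rewrite comm_scalarB XiXi_comb_comm opprB.
under eq_bigr => i _ do rewrite sumrB.
rewrite sumrB (exchange_big_dep predT) //=.
under eq_bigr => j _ do rewrite -scaler_suml.
under [X in _ - X]eq_bigr => i _ do rewrite -scaler_suml.
rewrite -sumrB /xi_comb -sumrMnl -sumrN; apply: eq_bigr => i _.
rewrite -scalerBl scalerMnl -scaleNr; congr (_ *: _).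
by rewrite adT2_ord mulrnBl !sumrMnl opprB.
Qed.

Lemma eta_comb k : Defs.eta P Xi k = xi_comb (eta_coef n s k).
Proof.
have scommE (A B : M) : scomm false true A B = A * B - B * A by rewrite /scomm /= mul1r.
have ad_iter : iter k (scomm false true (phiT11 P Xi 2)) (phiT1m1 P Xi 1) =
    (- 2%:R) ^+ k *: xi_comb (eta_coef n s k).
  elim: k => [|k IH]; first by rewrite scale1r phiT1m1_1.
  have commZr (a : K) (A B : M) : A * (a *: B) - (a *: B) * A = a *: (A * B - B * A).
    by rewrite -scalerAr -scalerAl scalerBr.
  rewrite iterS IH scommE commZr phiT11_2_comm.
  by rewrite exprSr -scalerA scaleNr scaler_nat.
by rewrite /Defs.eta ad_iter scalerA -exprMn mulrNN mulVf // expr1n scale1r.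
Qed.

Lemma Z_scalar i : Z P Xi i = (\sum_(a < n) s a * eta_coef n s (2 * i) a)%:M.
Proof.
rewrite /Z /scomm /= mulN1r opprK !eta_comb xi_comb_anticomm raddfMn half_mulrn2.
by congr (_%:M); apply: eq_bigr => a _; rewrite [eta_coef _ _ 0 _]/= mulr1.
Qed.

End XiClifford.

Section EtaSeries.
Context {K : fieldType}.
Variables (n : nat) (s : nat -> K) (N : nat).
Local Notation sX j := ((s j)%:P * 'X).

Definition eta_series (i : nat) : {poly K} := \poly_(k < N) eta_coef n s k i.

Lemma take_eta_series i :
  take_poly N (eta_series i) =
  take_poly N (1 + 'X * adT2 n (fun j => (s j)%:P) eta_series i).
Proof.
apply/polyP => k; rewrite !coef_take_poly; case: ltnP => // kN.
rewrite coef_poly kN coefD coef1 coefXM; case: k kN => [|k] kN /=; first by rewrite addr0.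
rewrite add0r /adT2 coefB !coef_sum.
by congr (_ - _); apply: eq_bigr => j _; rewrite coefCM coef_poly ltnW.
Qed.

(* u_i of the header. *)
Definition split_series (i : nat) : {poly K} :=
  1 + 'X * (\sum_(i <= j < n) (s j)%:P * eta_series j
            - \sum_(0 <= j < i) (s j)%:P * eta_series j).

Lemma take_split_series_lo i : (i < n)%N ->
  take_poly N (split_series i) = take_poly N ((1 + sX i) * eta_series i).
Proof.
move=> lt_in; have -> : split_series i =
    1 + 'X * adT2 n (fun j => (s j)%:P) eta_series i + sX i * eta_series i.
  by rewrite /split_series /adT2 big_ltn //; ring.
by rewrite take_polyD -take_eta_series -take_polyD; congr take_poly; ring.
Qed.

Lemma take_split_series_hi i :
  take_poly N (split_series i.+1) = take_poly N ((1 - sX i) * eta_series i).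
Proof.
have -> : split_series i.+1 =
    1 + 'X * adT2 n (fun j => (s j)%:P) eta_series i - sX i * eta_series i.
  by rewrite /split_series /adT2 big_nat_recr //=; ring.
by rewrite take_polyD -take_eta_series -take_polyD; congr take_poly; ring.
Qed.

Lemma take_split_series_step i : (i < n)%N ->
  take_poly N (split_series i.+1 * (1 + sX i)) = take_poly N ((1 - sX i) * split_series i).
Proof.
move=> lt_in; rewrite (take_poly_mulr _ (take_split_series_hi i)).
by rewrite (take_poly_mull _ (take_split_series_lo _ lt_in)); congr take_poly; ring.
Qed.

Lemma take_split_series_telescope i : (i <= n)%N ->
  take_poly N (split_series i * \prod_(0 <= k < i) (1 + sX k)) =
  take_poly N (split_series 0 * \prod_(0 <= k < i) (1 - sX k)).
Proof.
elim: i => [|i IH] lt_in; first by rewrite !big_geq.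
rewrite !big_nat_recr //= mulrA mulrAC (take_poly_mulr _ (take_split_series_step _ lt_in)).
by rewrite -mulrA (take_poly_mull _ (IH (ltnW lt_in))); congr take_poly; ring.
Qed.

Definition chi_series : {poly K} := \sum_(j < n) (s j)%:P * eta_series j.

Lemma coef_chi_series k : (k < N)%N -> chi_series`_k = \sum_(j < n) s j * eta_coef n s k j.
Proof. by move=> kN; rewrite coef_sum; apply: eq_bigr => j _; rewrite coefCM coef_poly kN. Qed.

Lemma take_chi_series_identity :
  take_poly N ((1 - 'X * chi_series) * \prod_(k < n) (1 + sX k)) =
  take_poly N ((1 + 'X * chi_series) * \prod_(k < n) (1 - sX k)).
Proof.
have := take_split_series_telescope _ (leqnn n).
by rewrite /split_series !(big_geq (leqnn _)) !big_mkord sub0r subr0 mulrN => ->.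
Qed.

End EtaSeries.

Section ChiEsym.
Context {K : fieldType}.
Variables (n : nat) (s : nat -> K) (m : nat).
Local Notation sigma := (esym_val (fun a : 'I_n => s a)).
Local Notation chiS := (chi_series n s (2 * m).+2).
Local Notation A := (\prod_(k < n) (1 + (s k)%:P * 'X)).
Local Notation B := (\prod_(k < n) (1 - (s k)%:P * 'X)).

Lemma coef_chi_series_prodD : (chiS * (A + B))`_(2 * m) = sigma (2 * m).+1 *+ 2.
Proof.
have := congr1 (fun p : {poly K} => p`_(2 * m).+1) (take_chi_series_identity n s (2 * m).+2).
rewrite /= !coef_take_poly ltnSn !mulrBl !mulrDl !mul1r coefB coefD -!mulrA !coefXM /=.
move=> e; rewrite mulrDr coefD.
have -> : (chiS * A)`_(2 * m) + (chiS * B)`_(2 * m) =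
    A`_(2 * m).+1 - B`_(2 * m).+1 -
    (A`_(2 * m).+1 - (chiS * A)`_(2 * m) - (B`_(2 * m).+1 + (chiS * B)`_(2 * m))) by ring.
rewrite e subrr subr0 coef_prod_1DCX coef_prod_1BCX.
by rewrite -signr_odd oddS oddM /= mulN1r opprK mulr2n.
Qed.

Lemma coef_chi_series_prodD_expand : (chiS * (A + B))`_(2 * m) =
  (\sum_(j < m.+1) (\sum_(a < n) s a * eta_coef n s (2 * j) a) * sigma (2 * (m - j))%N) *+ 2.
Proof.
have coefDE p : (A + B)`_p = (1 + (-1) ^+ p) * sigma p.
  by rewrite coefD coef_prod_1DCX coef_prod_1BCX mulrDl mul1r.
rewrite coefM (sum_ord_even_odd m (fun k => chiS`_k * (A + B)`_(2 * m - k)%N)) /=.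
rewrite [X in _ + X]big1 ?addr0; last first.
  move=> j _; have lt_jm : ((2 * j).+1 <= 2 * m)%N by rewrite ltn_pmul2l.
  by rewrite coefDE -signr_odd oddB // oddS !oddM /= subrr mul0r mulr0.
rewrite -sumrMnl; apply: eq_bigr => j _.
have lt_jN : (2 * j < (2 * m).+2)%N by have := ltn_ord j; lia.
rewrite -mulnBr coefDE -signr_odd oddM /= coef_chi_series //.
by rewrite expr0 -mulr2n mulrnAl mul1r mulrnAr.
Qed.

Lemma chi_esym : 2%:R != 0 :> K ->
  \sum_(j < m.+1) (\sum_(a < n) s a * eta_coef n s (2 * j) a) * sigma (2 * (m - j))%N =
  sigma (2 * m).+1.
Proof.
move=> two_neq0; apply: (mulIf two_neq0).
by rewrite !mulr_natr -coef_chi_series_prodD_expand coef_chi_series_prodD.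
Qed.

End ChiEsym.

Theorem corollary5p5 (R : realType) (n d : nat) (s : 'I_n -> R[i])
    (P : 'M[R[i]]_d.+1) (Xi : 'I_n -> 'M[R[i]]_d.+1) :
  (0 < n)%N ->
  is_graded_hn_module P Xi ->
  x_acts_by Xi s ->
  graded_simple P Xi ->
  exists chi : nat -> R[i],
    (forall i : nat, Z P Xi i = (chi i)%:M) /\
    (forall m : nat,
       \sum_(j < m.+1) chi j * esym_val s (2 * (m - j)) = esym_val s (2 * m).+1).
Proof.
move=> _ [PP PXi XiC] XiXi _.
pose t (j : nat) : R[i] := if insub j is Some a then s a else 0.
have tE (a : 'I_n) : t a = s a by rewrite /t valK.
have XiXi_t (a : 'I_n) : Xi a * Xi a = (t a)%:M by rewrite tE XiXi.
have esymE p : esym_val (fun a : 'I_n => t a) p = esym_val s p.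
  by apply: eq_bigr => I _; apply: eq_bigr => a _; rewrite tE.
have two_neq0 : 2%:R != 0 :> R[i] by rewrite pnatr_eq0.
exists (fun i => \sum_(a < n) t a * eta_coef n t (2 * i) a); split => [i|m].
  exact: Z_scalar.
rewrite -esymE -(chi_esym n t m two_neq0).
by apply: eq_bigr => j _; rewrite esymE.
Qed.
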